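(* Let $\alpha,\beta$ be positive quadratic irrationals and let $A,B\in GL(2,\mathbb Z)$ be non-identity matrices with $\operatorname{Aut}(\mathcal A_\alpha)\cong\mathbb T^2\rtimes_{\psi_A}\mathbb Z$ and $\operatorname{Aut}(\mathcal A_\beta)\cong\mathbb T^2\rtimes_{\psi_B}\mathbb Z$. Then $\operatorname{Aut}(\mathcal A_\alpha)\cong\operatorname{Aut}(\mathcal A_\beta)$ if and only if there exists $C\in GL(2,\mathbb Z)$ with $B=C^{-1}AC$ or $B^{-1}=C^{-1}AC$.
   Context: For a positive irrational $\alpha$, $\mathcal A_\alpha=\{f\in C(\mathbb T^2): \hat f(m,n)=0 \text{ whenever } m+\alpha n<0\}$ (with $\mathbb T$ the unit circle and $\hat f$ the Fourier transform on $\mathbb Z^2$), a uniform algebra with the sup norm, and $\operatorname{Aut}(\mathcal A_\alpha)$ is its group of isometric automorphisms. For $A=\begin{bmatrix} a&b\\ c&d\end{bmatrix}\in GL(2,\mathbb Z)$, $\psi_A:\mathbb T^2\to\mathbb T^2$ is $\psi_A(c_1,c_2)=(c_1^ac_2^b,c_1^cc_2^d)$; the (continuous) automorphisms of the group $\mathbb T^2$ are exactly the $\psi_A$. The semidirect product $\mathbb T^2\rtimes_{\psi_A}\mathbb Z$ has multiplication $(\mathbf c,m)\cdot(\mathbf d,n)=(\mathbf c\,\psi_A^m(\mathbf d),m+n)$. Isomorphisms of these semidirect products are understood with automorphisms of $\mathbb T^2$ taken in the continuous sense (i.e. as topological groups). *)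

From Stdlib Require Import Reals ZArith List.
Open Scope R_scope.

Definition C := (R * R)%type.
Definition Cadd (z w : C) : C := (fst z + fst w, snd z + snd w).
Definition Csub (z w : C) : C := (fst z - fst w, snd z - snd w).
Definition Cmul (z w : C) : C :=
  (fst z * fst w - snd z * snd w, fst z * snd w + snd z * fst w).
Definition Cnorm (z : C) : R := sqrt (fst z * fst z + snd z * snd z).

Record Mat2 := mkMat2 { m11 : Z; m12 : Z; m21 : Z; m22 : Z }.
Definition Mmul (A B : Mat2) : Mat2 :=
  mkMat2 (m11 A * m11 B + m12 A * m21 B)%Z (m11 A * m12 B + m12 A * m22 B)%Z
         (m21 A * m11 B + m22 A * m21 B)%Z (m21 A * m12 B + m22 A * m22 B)%Z.
Definition Mid : Mat2 := mkMat2 1 0 0 1.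
Definition Mdet (A : Mat2) : Z := (m11 A * m22 A - m12 A * m21 A)%Z.
Definition inGL2Z (A : Mat2) : Prop := Mdet A = 1%Z \/ Mdet A = (-1)%Z.
(* inverse of A in GL(2,Z): det(A) * adj(A)  (det^-1 = det when det = +-1) *)
Definition Minv (A : Mat2) : Mat2 :=
  let d := Mdet A in
  mkMat2 (d * m22 A)%Z (- (d * m12 A))%Z (- (d * m21 A))%Z (d * m11 A)%Z.
Fixpoint Mpow (A : Mat2) (k : nat) : Mat2 :=
  match k with O => Mid | S k' => Mmul A (Mpow A k') end.
Definition Mzpow (A : Mat2) (m : Z) : Mat2 :=
  if (0 <=? m)%Z then Mpow A (Z.to_nat m) else Mpow (Minv A) (Z.to_nat (- m)).

(* ---------- the circle T = R/Z, in additive coordinate theta in [0,1),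
   theta <-> exp(2 pi i theta) ---------- *)
Definition Tt := {t : R | 0 <= t < 1}.
Definition T2 := (Tt * Tt)%type.
Definition distT (x y : R) : R := Rmin (frac_part (x - y)) (frac_part (y - x)).

(* psi_A (c1,c2) = (c1^a c2^b, c1^c c2^d), in additive coordinates *)
Definition psi1 (A : Mat2) (t1 t2 : R) : R :=
  frac_part (IZR (m11 A) * t1 + IZR (m12 A) * t2).
Definition psi2 (A : Mat2) (t1 t2 : R) : R :=
  frac_part (IZR (m21 A) * t1 + IZR (m22 A) * t2).

Definition SD := (T2 * Z)%type.
(* multiplication graph: z = x * y, with
   (c,m)(d,n) = (c psi_A^m(d), m+n) and psi_A^m = psi_{A^m} *)
Definition SDmul (A : Mat2) (x y z : SD) : Prop :=
  let '((c1, c2), m) := x in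
  let '((d1, d2), n) := y in
  let '((e1, e2), k) := z in
  let Am := Mzpow A m in
  k = (m + n)%Z /\
  proj1_sig e1 = frac_part (proj1_sig c1 + psi1 Am (proj1_sig d1) (proj1_sig d2)) /\
  proj1_sig e2 = frac_part (proj1_sig c2 + psi2 Am (proj1_sig d1) (proj1_sig d2)).
(* topology: product of the torus topology and the discrete topology on Z *)
Definition SDopen (U : SD -> Prop) : Prop :=
  forall x : SD, U x -> exists eps, 0 < eps /\
    forall y : SD, snd y = snd x ->
      distT (proj1_sig (fst (fst y))) (proj1_sig (fst (fst x))) < eps ->
      distT (proj1_sig (snd (fst y))) (proj1_sig (snd (fst x))) < eps -> U y.

(* ---------- C(T^2) as continuous doubly 1-periodic functions R^2 -> C ---------- *)
Definition periodic2 (f : R -> R -> C) : Prop :=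
  forall x y, f (x + 1) y = f x y /\ f x (y + 1) = f x y.
Definition continuous2 (f : R -> R -> C) : Prop :=
  forall x y eps, 0 < eps -> exists delta, 0 < delta /\
    forall x' y', Rabs (x' - x) < delta -> Rabs (y' - y) < delta ->
      Cnorm (Csub (f x' y') (f x y)) < eps.

Definition RintEq (g : R -> R) (a b l : R) : Prop :=
  exists pr : Riemann_integrable g a b, RiemannInt pr = l.
Definition Rint2Eq (g : R -> R -> R) (l : R) : Prop :=
  exists G : R -> R, (forall y, RintEq (fun x => g x y) 0 1 (G y)) /\ RintEq G 0 1 l.

(* hat f (m,n) = \int\int f(x,y) e^{-2 pi i (m x + n y)} dx dy = 0 *)
Definition fourier_zero (f : R -> R -> C) (m n : Z) : Prop :=
  let ph x y := 2 * PI * (IZR m * x + IZR n * y) in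
  Rint2Eq (fun x y => fst (f x y) * cos (ph x y) + snd (f x y) * sin (ph x y)) 0 /\
  Rint2Eq (fun x y => snd (f x y) * cos (ph x y) - fst (f x y) * sin (ph x y)) 0.

Definition inA (alpha : R) (f : R -> R -> C) : Prop :=
  periodic2 f /\ continuous2 f /\
  forall m n : Z, IZR m + alpha * IZR n < 0 -> fourier_zero f m n.
Definition SA (alpha : R) := {f : R -> R -> C | inA alpha f}.

Definition supLe (g : R -> R -> C) (M : R) : Prop := forall x y, Cnorm (g x y) <= M.

Definition isAut (alpha : R) (Phi : SA alpha -> SA alpha) : Prop :=
  (forall f g, Phi f = Phi g -> f = g) /\
  (forall g, exists f, Phi f = g) /\
  (forall f g h : SA alpha,
     (forall x y, proj1_sig h x y = Cadd (proj1_sig f x y) (proj1_sig g x y)) ->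
     forall x y, proj1_sig (Phi h) x y = Cadd (proj1_sig (Phi f) x y) (proj1_sig (Phi g) x y)) /\
  (forall (lam : C) (f h : SA alpha),
     (forall x y, proj1_sig h x y = Cmul lam (proj1_sig f x y)) ->
     forall x y, proj1_sig (Phi h) x y = Cmul lam (proj1_sig (Phi f) x y)) /\
  (forall f g h : SA alpha,
     (forall x y, proj1_sig h x y = Cmul (proj1_sig f x y) (proj1_sig g x y)) ->
     forall x y, proj1_sig (Phi h) x y = Cmul (proj1_sig (Phi f) x y) (proj1_sig (Phi g) x y)) /\
  (forall f M, supLe (proj1_sig (Phi f)) M <-> supLe (proj1_sig f) M).

Definition AutA (alpha : R) := {Phi : SA alpha -> SA alpha | isAut alpha Phi}.
Definition AutMul (alpha : R) (Phi Psi Chi : AutA alpha) : Prop :=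
  forall f, proj1_sig Chi f = proj1_sig Phi (proj1_sig Psi f).
Definition supLt (g : R -> R -> C) (eps : R) : Prop :=
  exists d, d < eps /\ supLe g d.
Definition AutOpen (alpha : R) (U : AutA alpha -> Prop) : Prop :=
  forall Phi0, U Phi0 -> exists (fs : list (SA alpha)) (eps : R), 0 < eps /\
    forall Phi : AutA alpha,
      (forall f, In f fs ->
         supLt (fun x y => Csub (proj1_sig (proj1_sig Phi f) x y)
                                (proj1_sig (proj1_sig Phi0 f) x y)) eps) ->
      U Phi.

Definition is_topgrp_iso {X Y : Type}
  (mX : X -> X -> X -> Prop) (oX : (X -> Prop) -> Prop)
  (mY : Y -> Y -> Y -> Prop) (oY : (Y -> Prop) -> Prop) (F : X -> Y) : Prop :=
  (forall a b, F a = F b -> a = b) /\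
  (forall y, exists x, F x = y) /\
  (forall a b c, mX a b c -> mY (F a) (F b) (F c)) /\
  (forall U, oY U -> oX (fun x => U (F x))) /\
  (forall V, oX V -> oY (fun y => exists x, V x /\ F x = y)).

Definition topgrp_isomorphic {X Y : Type}
  (mX : X -> X -> X -> Prop) (oX : (X -> Prop) -> Prop)
  (mY : Y -> Y -> Y -> Prop) (oY : (Y -> Prop) -> Prop) : Prop :=
  exists F : X -> Y, is_topgrp_iso mX oX mY oY F.

Definition irrational (x : R) : Prop :=
  forall p q : Z, q <> 0%Z -> x <> IZR p / IZR q.
Definition quadratic_irrational (x : R) : Prop :=
  irrational x /\
  exists a b c : Z, a <> 0%Z /\ IZR a * x ^ 2 + IZR b * x + IZR c = 0.

From Stdlib Require Import Reals ZArith List Lra Lia Psatz Setoid Morphisms.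
From Stdlib Require Import FunctionalExtensionality PropExtensionality ProofIrrelevance ClassicalEpsilon.
Open Scope R_scope.

(* The hypotheses identify Aut(A_alpha) and Aut(A_beta) with T^2 x|_A Z and T^2 x|_B Z, so
   the theorem is the classification of these semidirect products; the arithmetic of alpha and
   beta plays no further role.  A conjugating matrix Q gives the isomorphism
   (t, m) |-> (Q^-1 t, m), and (t, m) |-> (t, -m) identifies the products for B and B^-1.
   Conversely, the elements admitting iterated square roots of every order are exactly those of
   T^2, so an isomorphism K preserves T^2; a continuous endomorphism of T^2 is given by an integer
   matrix C, invertible because K^-1 is given by another one.  K sends the generator (0, 1) to an
   element with Z-part s = +-1, and applying K to (0, 1)(t, 0) = (A t, 0)(0, 1) yields
   B^s C = C A. *)

Lemma pred_ext {X : Type} (P Q : X -> Prop) : (forall x, P x <-> Q x) -> P = Q.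
Proof.
  intros H; apply functional_extensionality; intro x; apply propositional_extensionality, H.
Qed.

Section TopologicalGroupIsomorphisms.
Variables (X Y W : Type).
Variables (mX : X -> X -> X -> Prop) (oX : (X -> Prop) -> Prop).
Variables (mY : Y -> Y -> Y -> Prop) (oY : (Y -> Prop) -> Prop).
Variables (mW : W -> W -> W -> Prop) (oW : (W -> Prop) -> Prop).

Lemma is_topgrp_iso_comp (F : X -> Y) (G : Y -> W) :
  is_topgrp_iso mX oX mY oY F -> is_topgrp_iso mY oY mW oW G ->
  is_topgrp_iso mX oX mW oW (fun x => G (F x)).
Proof.
  intros [Finj [Fsurj [Fmul [Fcont Fopen]]]] [Ginj [Gsurj [Gmul [Gcont Gopen]]]].
  split; [|split; [|split; [|split]]].
  - intros a b H; apply Finj, Ginj, H.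
  - intro z; destruct (Gsurj z) as [y <-]; destruct (Fsurj y) as [x <-]; now exists x.
  - intros a b c H; apply Gmul, Fmul, H.
  - intros U HU; apply (Fcont _ (Gcont U HU)).
  - intros V HV.
    replace (fun z => exists x, V x /\ G (F x) = z)
      with (fun z => exists y, (exists x, V x /\ F x = y) /\ G y = z); [now apply Gopen, Fopen|].
    apply pred_ext; intro z; split.
    + intros [y [[x [Hx <-]] <-]]; eauto.
    + intros [x [Hx <-]]; eauto.
Qed.

Lemma topgrp_isomorphic_trans :
  topgrp_isomorphic mX oX mY oY -> topgrp_isomorphic mY oY mW oW -> topgrp_isomorphic mX oX mW oW.
Proof. intros [F HF] [G HG]; exists (fun x => G (F x)); now apply is_topgrp_iso_comp. Qed.

Hypothesis mX_total : forall a b, exists c, mX a b c.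
Hypothesis mY_functional : forall a b c c', mY a b c -> mY a b c' -> c = c'.

Lemma is_topgrp_iso_inverse (F : X -> Y) :
  is_topgrp_iso mX oX mY oY F ->
  exists G, is_topgrp_iso mY oY mX oX G /\ (forall y, F (G y) = y) /\ (forall x, G (F x) = x).
Proof.
  intros [Finj [Fsurj [Fmul [Fcont Fopen]]]].
  set (G y := proj1_sig (constructive_indefinite_description _ (Fsurj y))).
  assert (FG : forall y, F (G y) = y)
    by (intro y; exact (proj2_sig (constructive_indefinite_description _ (Fsurj y)))).
  assert (GF : forall x, G (F x) = x) by (intro x; apply Finj, FG).
  exists G; split; [|split; assumption].
  split; [|split; [|split; [|split]]].
  - intros a b H; now rewrite <- (FG a), <- (FG b), H.
  - intro x; exists (F x); apply GF.
  - intros a b c H; destruct (mX_total (G a) (G b)) as [c' Hc'].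
    pose proof (Fmul _ _ _ Hc') as H'; rewrite !FG in H'.
    now rewrite (mY_functional _ _ _ _ H H'), GF.
  - intros V HV.
    replace (fun y => V (G y)) with (fun y => exists x, V x /\ F x = y); [now apply Fopen|].
    apply pred_ext; intro y; split.
    + intros [x [Hx <-]]; now rewrite GF.
    + intro H; exists (G y); auto.
  - intros U HU.
    replace (fun x => exists y, U y /\ G y = x) with (fun x => U (F x)); [now apply Fcont|].
    apply pred_ext; intro x; split.
    + intro H; exists (F x); auto.
    + intros [y [Hy <-]]; now rewrite FG.
Qed.

Lemma topgrp_isomorphic_sym :
  topgrp_isomorphic mX oX mY oY -> topgrp_isomorphic mY oY mX oX.
Proof.
  intros [F HF]; destruct (is_topgrp_iso_inverse F HF) as [G [HG _]]; now exists G.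
Qed.

End TopologicalGroupIsomorphisms.

Lemma isAut_comp alpha (Phi Psi : AutA alpha) :
  isAut alpha (fun f => proj1_sig Phi (proj1_sig Psi f)).
Proof.
  destruct Phi as [P [Pi [Ps [Pa [Pl [Pm Pn]]]]]], Psi as [Q [Qi [Qs [Qa [Ql [Qm Qn]]]]]]; simpl.
  split; [|split; [|split; [|split; [|split]]]].
  - intros f g H; apply Qi, Pi, H.
  - intro g; destruct (Ps g) as [f <-]; destruct (Qs f) as [h <-]; now exists h.
  - intros f g h H; apply Pa, Qa, H.
  - intros lam f h H; apply Pl, Ql, H.
  - intros f g h H; apply Pm, Qm, H.
  - intros f M; rewrite Pn; apply Qn.
Qed.

Lemma AutMul_total alpha : forall Phi Psi, exists Chi, AutMul alpha Phi Psi Chi.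
Proof. intros Phi Psi; now exists (exist _ _ (isAut_comp alpha Phi Psi)). Qed.

Definition cong1 (x y : R) : Prop := exists k : Z, x = y + IZR k.
Infix "≡" := cong1 (at level 70).

#[export] Instance cong1_equiv : Equivalence cong1.
Proof.
  split.
  - intro x; exists 0%Z; simpl; ring.
  - intros x y [k Hk]; exists (- k)%Z; rewrite opp_IZR; lra.
  - intros x y z [k Hk] [l Hl]; exists (k + l)%Z; rewrite plus_IZR; lra.
Qed.

#[export] Instance Rplus_cong1 : Proper (cong1 ==> cong1 ==> cong1) Rplus.
Proof. intros x x' [k Hk] y y' [l Hl]; exists (k + l)%Z; rewrite plus_IZR; lra. Qed.

#[export] Instance Ropp_cong1 : Proper (cong1 ==> cong1) Ropp.
Proof. intros x x' [k Hk]; exists (- k)%Z; rewrite opp_IZR; lra. Qed.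

#[export] Instance Rminus_cong1 : Proper (cong1 ==> cong1 ==> cong1) Rminus.
Proof. intros x x' Hx y y' Hy; unfold Rminus; now rewrite Hx, Hy. Qed.

#[export] Instance IZR_mul_cong1 (n : Z) : Proper (cong1 ==> cong1) (Rmult (IZR n)).
Proof. intros x x' [k Hk]; exists (n * k)%Z; rewrite mult_IZR; subst; ring. Qed.

#[export] Instance INR_mul_cong1 (n : nat) : Proper (cong1 ==> cong1) (Rmult (INR n)).
Proof. rewrite INR_IZR_INZ; apply IZR_mul_cong1. Qed.

Lemma cong1_IZR k : IZR k ≡ 0.
Proof. exists k; ring. Qed.

Lemma cong1_add_cancel_l x y z : x + y ≡ x + z -> y ≡ z.
Proof. intros [k Hk]; exists k; lra. Qed.

Lemma frac_part_cong1 x : frac_part x ≡ x.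
Proof. exists (- Int_part x)%Z; unfold frac_part; rewrite opp_IZR; ring. Qed.

Lemma frac_part_bounds x : 0 <= frac_part x < 1.
Proof. destruct (base_fp x); lra. Qed.

Lemma IZR_small_eq0 k : -1 < IZR k < 1 -> k = 0%Z.
Proof. intros [H1 H2]; apply lt_IZR in H1; apply lt_IZR in H2; lia. Qed.

Lemma cong1_close_eq x y : Rabs (x - y) < 1 -> x ≡ y -> x = y.
Proof.
  intros H [k Hk]; apply Rabs_def2 in H.
  assert (k = 0%Z) by (apply IZR_small_eq0; lra); subst k; simpl in Hk; lra.
Qed.

Lemma cong1_unit_eq x y : 0 <= x < 1 -> 0 <= y < 1 -> x ≡ y -> x = y.
Proof. intros Hx Hy; apply cong1_close_eq; apply Rabs_def1; lra. Qed.

Lemma frac_part_of_cong1 x y : 0 <= y < 1 -> x ≡ y -> frac_part x = y.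
Proof.
  intros Hy H; apply cong1_unit_eq; [apply frac_part_bounds|assumption|].
  now rewrite frac_part_cong1.
Qed.

Definition near (e x y : R) : Prop := exists z, Rabs z < e /\ x ≡ y + z.

Lemma near_open e x y : near e x y -> exists r, 0 < r /\ forall x', near r x' x -> near e x' y.
Proof.
  intros [z [Hz Hxy]]; exists (e - Rabs z); split; [lra|].
  intros x' [w [Hw Hx']]; exists (z + w); split.
  - pose proof (Rabs_triang z w); lra.
  - rewrite Hx', Hxy, Rplus_assoc; reflexivity.
Qed.

Lemma distT_lt_of_near e x y : 0 < e <= 1/2 -> near e x y -> distT x y < e.
Proof.
  intros He [z [Hz Hxy]]; unfold distT.
  destruct (Rle_lt_dec 0 z) as [Hp|Hn].
  - rewrite Rabs_right in Hz by lra.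
    assert (frac_part (x - y) = z).
    { apply frac_part_of_cong1; [lra|]. rewrite Hxy; replace (y + z - y) with z by ring; reflexivity. }
    pose proof (Rmin_l (frac_part (x - y)) (frac_part (y - x))); lra.
  - rewrite Rabs_left in Hz by lra.
    assert (frac_part (y - x) = - z).
    { apply frac_part_of_cong1; [lra|]. rewrite Hxy; replace (y - (y + z)) with (- z) by ring; reflexivity. }
    pose proof (Rmin_r (frac_part (x - y)) (frac_part (y - x))); lra.
Qed.

Lemma near_of_distT_lt e x y : distT x y < e -> near e x y.
Proof.
  unfold distT, Rmin; destruct (Rle_dec _ _) as [H|H]; intro Hd.
  - exists (frac_part (x - y)); pose proof (frac_part_bounds (x - y)); split.
    + rewrite Rabs_right; lra.
    + rewrite frac_part_cong1; replace (y + (x - y)) with x by ring; reflexivity.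
  - exists (- frac_part (y - x)); pose proof (frac_part_bounds (y - x)); split.
    + rewrite Rabs_left1; lra.
    + rewrite frac_part_cong1; replace (y + - (y - x)) with x by ring; reflexivity.
Qed.

Lemma mkMat2_eq (a b c d a' b' c' d' : Z) :
  a = a' -> b = b' -> c = c' -> d = d' -> mkMat2 a b c d = mkMat2 a' b' c' d'.
Proof. intros; subst; reflexivity. Qed.

Ltac mat_ring := unfold Mmul, Mid, Mdet;
  cbn -[Z.mul Z.add Z.sub Z.opp]; first [apply mkMat2_eq; ring | ring].

Lemma Mmul_assoc X Y W : Mmul X (Mmul Y W) = Mmul (Mmul X Y) W.
Proof. destruct X, Y, W; mat_ring. Qed.
Lemma Mmul_1_l X : Mmul Mid X = X.
Proof. destruct X; mat_ring. Qed.
Lemma Mmul_1_r X : Mmul X Mid = X.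
Proof. destruct X; mat_ring. Qed.
Lemma Mdet_mul X Y : Mdet (Mmul X Y) = (Mdet X * Mdet Y)%Z.
Proof. destruct X, Y; mat_ring. Qed.

Lemma Mmul_Minv_l X : inGL2Z X -> Mmul (Minv X) X = Mid.
Proof.
  destruct X as [a b c d]; unfold inGL2Z, Minv, Mmul, Mdet, Mid; cbn -[Z.mul Z.add Z.sub Z.opp].
  intros [H|H]; rewrite H; apply mkMat2_eq; nia.
Qed.
Lemma Mmul_Minv_r X : inGL2Z X -> Mmul X (Minv X) = Mid.
Proof.
  destruct X as [a b c d]; unfold inGL2Z, Minv, Mmul, Mdet, Mid; cbn -[Z.mul Z.add Z.sub Z.opp].
  intros [H|H]; rewrite H; apply mkMat2_eq; nia.
Qed.

Lemma inGL2Z_of_Mmul_eq1 X Y : Mmul X Y = Mid -> inGL2Z X.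
Proof.
  intro H; assert (Hdet : (Mdet X * Mdet Y = 1)%Z) by (rewrite <- Mdet_mul, H; reflexivity).
  unfold inGL2Z; eapply Z.eq_mul_1; eauto.
Qed.

Lemma Minv_unique X Y : inGL2Z X -> Mmul X Y = Mid -> Y = Minv X.
Proof.
  intros HX H; now rewrite <- (Mmul_1_l Y), <- (Mmul_Minv_l X HX), <- Mmul_assoc, H, Mmul_1_r.
Qed.

Lemma inGL2Z_Minv X : inGL2Z X -> inGL2Z (Minv X).
Proof. intro HX; apply (inGL2Z_of_Mmul_eq1 _ X), Mmul_Minv_l, HX. Qed.

Lemma Minv_involutive X : inGL2Z X -> Minv (Minv X) = X.
Proof. intro HX; symmetry; apply Minv_unique; [now apply inGL2Z_Minv|now apply Mmul_Minv_l]. Qed.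

Lemma Mmul_cancel_Minv_mid X Y W : inGL2Z Y -> Mmul (Mmul X Y) (Mmul (Minv Y) W) = Mmul X W.
Proof. intro HY; now rewrite <- Mmul_assoc, (Mmul_assoc Y), Mmul_Minv_r, Mmul_1_l. Qed.

Lemma Mpow_conj Q X n : inGL2Z Q ->
  Mpow (Mmul (Minv Q) (Mmul X Q)) n = Mmul (Minv Q) (Mmul (Mpow X n) Q).
Proof.
  intro HQ; induction n as [|n IH]; simpl.
  - now rewrite Mmul_1_l, Mmul_Minv_l.
  - rewrite IH, (Mmul_assoc (Minv Q) X Q), Mmul_cancel_Minv_mid by exact HQ.
    now rewrite !Mmul_assoc.
Qed.

Lemma Minv_conj X Q : inGL2Z X -> inGL2Z Q ->
  Minv (Mmul (Minv Q) (Mmul X Q)) = Mmul (Minv Q) (Mmul (Minv X) Q).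
Proof.
  intros HX HQ.
  assert (H : Mmul (Mmul (Minv Q) (Mmul X Q)) (Mmul (Minv Q) (Mmul (Minv X) Q)) = Mid)
    by now rewrite (Mmul_assoc (Minv Q) X Q), !Mmul_cancel_Minv_mid, Mmul_Minv_l.
  symmetry; exact (Minv_unique _ _ (inGL2Z_of_Mmul_eq1 _ _ H) H).
Qed.

Lemma Mzpow_conj X Q m : inGL2Z X -> inGL2Z Q ->
  Mzpow (Mmul (Minv Q) (Mmul X Q)) m = Mmul (Minv Q) (Mmul (Mzpow X m) Q).
Proof.
  intros HX HQ; unfold Mzpow; destruct (0 <=? m)%Z; [|rewrite Minv_conj by assumption];
    now apply Mpow_conj.
Qed.

Lemma Mzpow_opp X m : inGL2Z X -> Mzpow X (- m) = Mzpow (Minv X) m.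
Proof.
  intro HX; unfold Mzpow.
  destruct (Z.leb_spec 0 (- m)), (Z.leb_spec 0 m).
  - now replace m with 0%Z by lia.
  - now rewrite Minv_involutive.
  - now rewrite Z.opp_involutive.
  - lia.
Qed.

Lemma Mzpow_1 X : Mzpow X 1 = X.
Proof. apply Mmul_1_r. Qed.
Lemma Mzpow_m1 X : Mzpow X (-1) = Minv X.
Proof. apply Mmul_1_r. Qed.

Definition lin1 (M : Mat2) (t1 t2 : R) : R := IZR (m11 M) * t1 + IZR (m12 M) * t2.
Definition lin2 (M : Mat2) (t1 t2 : R) : R := IZR (m21 M) * t1 + IZR (m22 M) * t2.

#[export] Instance lin1_cong1 M : Proper (cong1 ==> cong1 ==> cong1) (lin1 M).
Proof. intros t t' Ht s s' Hs; unfold lin1; now rewrite Ht, Hs. Qed.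
#[export] Instance lin2_cong1 M : Proper (cong1 ==> cong1 ==> cong1) (lin2 M).
Proof. intros t t' Ht s s' Hs; unfold lin2; now rewrite Ht, Hs. Qed.

Lemma lin1_mul M N t1 t2 : lin1 (Mmul M N) t1 t2 = lin1 M (lin1 N t1 t2) (lin2 N t1 t2).
Proof. destruct M, N; unfold lin1, lin2, Mmul; simpl; rewrite !plus_IZR, !mult_IZR; ring. Qed.
Lemma lin2_mul M N t1 t2 : lin2 (Mmul M N) t1 t2 = lin2 M (lin1 N t1 t2) (lin2 N t1 t2).
Proof. destruct M, N; unfold lin1, lin2, Mmul; simpl; rewrite !plus_IZR, !mult_IZR; ring. Qed.
Lemma lin1_id t1 t2 : lin1 Mid t1 t2 = t1.
Proof. unfold lin1, Mid; simpl; ring. Qed.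
Lemma lin2_id t1 t2 : lin2 Mid t1 t2 = t2.
Proof. unfold lin2, Mid; simpl; ring. Qed.
Lemma lin1_add M a b c d : lin1 M (a + c) (b + d) = lin1 M a b + lin1 M c d.
Proof. unfold lin1; ring. Qed.
Lemma lin2_add M a b c d : lin2 M (a + c) (b + d) = lin2 M a b + lin2 M c d.
Proof. unfold lin2; ring. Qed.
Lemma lin1_0 M : lin1 M 0 0 = 0.
Proof. unfold lin1; ring. Qed.
Lemma lin2_0 M : lin2 M 0 0 = 0.
Proof. unfold lin2; ring. Qed.

Lemma IZR_eq0_of_cong1 (p : Z) : (forall t, 0 <= t < 1 -> IZR p * t ≡ 0) -> p = 0%Z.
Proof.
  intro H; set (t := / (2 * (Rabs (IZR p) + 1))).
  pose proof (Rabs_pos (IZR p)).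
  assert (Ht : 0 < t) by (apply Rinv_0_lt_compat; lra).
  assert (Ht1 : t * (2 * (Rabs (IZR p) + 1)) = 1) by (unfold t; field; lra).
  assert (Hpt : IZR p * t = 0).
  { apply cong1_close_eq; [|apply H; nra].
    rewrite Rminus_0_r, Rabs_mult, (Rabs_right t) by lra; nra. }
  apply Rmult_integral in Hpt as [Hp|]; [now apply eq_IZR|lra].
Qed.

Lemma Mat2_eq_of_lin M N :
  (forall t1 t2, 0 <= t1 < 1 -> 0 <= t2 < 1 ->
     lin1 M t1 t2 ≡ lin1 N t1 t2 /\ lin2 M t1 t2 ≡ lin2 N t1 t2) -> M = N.
Proof.
  intro H; destruct M as [a b c d], N as [a' b' c' d']; unfold lin1, lin2 in H; simpl in H.
  assert (R0 : 0 <= 0 < 1) by lra.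
  apply mkMat2_eq; apply Zminus_eq, IZR_eq0_of_cong1; intros t Ht; rewrite minus_IZR.
  - destruct (H t 0 Ht R0) as [[k Hk] _]; exists k; nra.
  - destruct (H 0 t R0 Ht) as [[k Hk] _]; exists k; nra.
  - destruct (H t 0 Ht R0) as [_ [k Hk]]; exists k; nra.
  - destruct (H 0 t R0 Ht) as [_ [k Hk]]; exists k; nra.
Qed.

Definition tor1 (x : SD) : R := proj1_sig (fst (fst x)).
Definition tor2 (x : SD) : R := proj1_sig (snd (fst x)).
Definition zpart (x : SD) : Z := snd x.

Definition mkT (t : R) : Tt := exist _ (frac_part t) (frac_part_bounds t).
Definition sdpt (t1 t2 : R) (m : Z) : SD := ((mkT t1, mkT t2), m).

Lemma tor1_sdpt t1 t2 m : tor1 (sdpt t1 t2 m) ≡ t1.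
Proof. apply frac_part_cong1. Qed.
Lemma tor2_sdpt t1 t2 m : tor2 (sdpt t1 t2 m) ≡ t2.
Proof. apply frac_part_cong1. Qed.
Lemma zpart_sdpt t1 t2 m : zpart (sdpt t1 t2 m) = m.
Proof. reflexivity. Qed.
Lemma tor1_sdpt0 m : tor1 (sdpt 0 0 m) = 0.
Proof. apply frac_part_of_cong1; [lra|reflexivity]. Qed.
Lemma tor2_sdpt0 m : tor2 (sdpt 0 0 m) = 0.
Proof. apply frac_part_of_cong1; [lra|reflexivity]. Qed.

Lemma SD_eq x y : tor1 x ≡ tor1 y -> tor2 x ≡ tor2 y -> zpart x = zpart y -> x = y.
Proof.
  destruct x as [[[a Ha] [b Hb]] m], y as [[[a' Ha'] [b' Hb']] m']; unfold tor1, tor2, zpart; simpl.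
  intros H1 H2 ->.
  apply cong1_unit_eq in H1; [|assumption..]; apply cong1_unit_eq in H2; [|assumption..]; subst.
  now rewrite (proof_irrelevance _ Ha Ha'), (proof_irrelevance _ Hb Hb').
Qed.

Lemma sdpt_eta x : sdpt (tor1 x) (tor2 x) (zpart x) = x.
Proof. apply SD_eq; [apply tor1_sdpt|apply tor2_sdpt|reflexivity]. Qed.

Lemma sdpt_cong1 t1 t2 s1 s2 m : t1 ≡ s1 -> t2 ≡ s2 -> sdpt t1 t2 m = sdpt s1 s2 m.
Proof. intros H1 H2; apply SD_eq; now rewrite ?tor1_sdpt, ?tor2_sdpt. Qed.

Lemma SDmul_cong1 A x y z : SDmul A x y z <->
  zpart z = (zpart x + zpart y)%Z /\
  tor1 z ≡ tor1 x + lin1 (Mzpow A (zpart x)) (tor1 y) (tor2 y) /\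
  tor2 z ≡ tor2 x + lin2 (Mzpow A (zpart x)) (tor1 y) (tor2 y).
Proof.
  destruct x as [[a1 a2] m], y as [[b1 b2] n], z as [[e1 e2] k].
  unfold SDmul, tor1, tor2, zpart, psi1, psi2; simpl.
  fold (lin1 (Mzpow A m) (proj1_sig b1) (proj1_sig b2)) (lin2 (Mzpow A m) (proj1_sig b1) (proj1_sig b2)).
  split.
  - intros [Hk [H1 H2]]; rewrite H1, H2, !frac_part_cong1; split; [assumption|split; reflexivity].
  - intros [Hk [H1 H2]]; split; [assumption|split].
    + symmetry; apply frac_part_of_cong1; [exact (proj2_sig e1)|now rewrite frac_part_cong1].
    + symmetry; apply frac_part_of_cong1; [exact (proj2_sig e2)|now rewrite frac_part_cong1].
Qed.

Lemma SDmul_sdpt A s1 s2 m t1 t2 n u1 u2 k :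
  u1 ≡ s1 + lin1 (Mzpow A m) t1 t2 -> u2 ≡ s2 + lin2 (Mzpow A m) t1 t2 -> k = (m + n)%Z ->
  SDmul A (sdpt s1 s2 m) (sdpt t1 t2 n) (sdpt u1 u2 k).
Proof. intros H1 H2 Hk; apply SDmul_cong1; now rewrite !zpart_sdpt, !tor1_sdpt, !tor2_sdpt. Qed.

Lemma SDmul_total A : forall x y, exists z, SDmul A x y z.
Proof.
  intros x y.
  exists (sdpt (tor1 x + lin1 (Mzpow A (zpart x)) (tor1 y) (tor2 y))
               (tor2 x + lin2 (Mzpow A (zpart x)) (tor1 y) (tor2 y)) (zpart x + zpart y)).
  apply SDmul_cong1; now rewrite tor1_sdpt, tor2_sdpt.
Qed.

Lemma SDmul_functional A : forall x y z z', SDmul A x y z -> SDmul A x y z' -> z = z'.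
Proof.
  intros x y z z' H H'; apply SDmul_cong1 in H as [Hm [H1 H2]]; apply SDmul_cong1 in H' as [Hm' [H1' H2']].
  apply SD_eq; [now rewrite H1, H1'|now rewrite H2, H2'|congruence].
Qed.

(** * Isomorphisms induced by matrices *)

Definition sd_lin (D : Mat2) (s : Z) (x : SD) : SD :=
  sdpt (lin1 D (tor1 x) (tor2 x)) (lin2 D (tor1 x) (tor2 x)) (s * zpart x).

Lemma sd_lin_inv D E s x : Mmul E D = Mid -> (s * s = 1)%Z -> sd_lin E s (sd_lin D s x) = x.
Proof.
  intros HED Hs; apply SD_eq; unfold sd_lin; simpl zpart.
  - now rewrite tor1_sdpt, tor1_sdpt, tor2_sdpt, <- lin1_mul, HED, lin1_id.
  - now rewrite tor2_sdpt, tor1_sdpt, tor2_sdpt, <- lin2_mul, HED, lin2_id.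
  - rewrite Z.mul_assoc, Hs; apply Z.mul_1_l.
Qed.

Lemma sd_lin_mul A B D s x y z :
  (forall m, Mmul D (Mzpow A m) = Mmul (Mzpow B (s * m)) D) ->
  SDmul A x y z -> SDmul B (sd_lin D s x) (sd_lin D s y) (sd_lin D s z).
Proof.
  intros HD H; apply SDmul_cong1 in H as [Hm [H1 H2]]; apply SDmul_cong1; unfold sd_lin.
  rewrite !zpart_sdpt, !tor1_sdpt, !tor2_sdpt, H1, H2, lin1_add, lin2_add.
  rewrite <- lin1_mul, <- lin2_mul, HD, lin1_mul, lin2_mul, Hm.
  split; [ring|split; reflexivity].
Qed.

Lemma near_mono d d' x y : d <= d' -> near d x y -> near d' x y.
Proof. intros Hd [z [Hz Hxy]]; exists z; split; [lra|assumption]. Qed.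

Definition Mnorm (D : Mat2) : R :=
  Rabs (IZR (m11 D)) + Rabs (IZR (m12 D)) + Rabs (IZR (m21 D)) + Rabs (IZR (m22 D)).

Lemma Mnorm_nonneg D : 0 <= Mnorm D.
Proof.
  unfold Mnorm; pose proof (Rabs_pos (IZR (m11 D))); pose proof (Rabs_pos (IZR (m12 D)));
    pose proof (Rabs_pos (IZR (m21 D))); pose proof (Rabs_pos (IZR (m22 D))); lra.
Qed.

Lemma near_lin D d t1 t2 s1 s2 : near d t1 s1 -> near d t2 s2 ->
  near ((Mnorm D + 1) * d) (lin1 D t1 t2) (lin1 D s1 s2) /\
  near ((Mnorm D + 1) * d) (lin2 D t1 t2) (lin2 D s1 s2).
Proof.
  intros [z1 [Hz1 H1]] [z2 [Hz2 H2]]; unfold Mnorm.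
  pose proof (Rabs_pos (IZR (m11 D))); pose proof (Rabs_pos (IZR (m12 D)));
    pose proof (Rabs_pos (IZR (m21 D))); pose proof (Rabs_pos (IZR (m22 D))).
  pose proof (Rabs_pos z1); pose proof (Rabs_pos z2).
  split; [exists (lin1 D z1 z2)|exists (lin2 D z1 z2)]; (split; [|rewrite H1, H2, <- ?lin1_add, <- ?lin2_add; reflexivity]);
    unfold lin1, lin2; eapply Rle_lt_trans; try apply Rabs_triang; rewrite !Rabs_mult; nra.
Qed.

Lemma SDopen_intro U :
  (forall x, U x -> exists e, 0 < e /\ forall y, zpart y = zpart x ->
     near e (tor1 y) (tor1 x) -> near e (tor2 y) (tor2 x) -> U y) -> SDopen U.
Proof.
  intros HU x Hx; destruct (HU x Hx) as [e [He HUx]]; exists e; split; [assumption|].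
  intros y Hy H1 H2; apply HUx; [assumption|apply near_of_distT_lt..]; assumption.
Qed.

Lemma SDopen_elim U x : SDopen U -> U x ->
  exists e, 0 < e <= 1/2 /\ forall y, zpart y = zpart x ->
    near e (tor1 y) (tor1 x) -> near e (tor2 y) (tor2 x) -> U y.
Proof.
  intros HU Hx; destruct (HU x Hx) as [eps [Heps HUx]].
  set (e := Rmin eps (1/2)).
  assert (He : 0 < e <= 1/2) by (unfold e, Rmin; destruct (Rle_dec _ _); lra).
  assert (Hee : e <= eps) by apply Rmin_l.
  exists e; split; [assumption|].
  intros y Hy H1 H2; apply HUx; [assumption|..];
    (eapply Rlt_le_trans; [apply distT_lt_of_near; eassumption|exact Hee]).
Qed.

Lemma SDopen_preimage_sd_lin D s U : SDopen U -> SDopen (fun x => U (sd_lin D s x)).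
Proof.
  intro HU; apply SDopen_intro; intros x Hx.
  destruct (SDopen_elim U _ HU Hx) as [e [He HUx]].
  pose proof (Mnorm_nonneg D).
  set (d := e / (Mnorm D + 1)).
  assert (Hd : 0 < d) by (apply Rdiv_lt_0_compat; lra).
  assert (Hde : (Mnorm D + 1) * d = e) by (unfold d; field; lra).
  exists d; split; [assumption|]; intros y Hy H1 H2.
  destruct (near_lin D d _ _ _ _ H1 H2) as [N1 N2]; rewrite Hde in N1, N2.
  apply HUx; unfold sd_lin.
  - now rewrite !zpart_sdpt, Hy.
  - destruct N1 as [z [Hz Hyx]]; exists z; split; [assumption|]; now rewrite !tor1_sdpt.
  - destruct N2 as [z [Hz Hyx]]; exists z; split; [assumption|]; now rewrite !tor2_sdpt.
Qed.

Lemma sd_lin_iso A B D E s :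
  Mmul E D = Mid -> Mmul D E = Mid -> (s * s = 1)%Z ->
  (forall m, Mmul D (Mzpow A m) = Mmul (Mzpow B (s * m)) D) ->
  is_topgrp_iso (SDmul A) SDopen (SDmul B) SDopen (sd_lin D s).
Proof.
  intros HED HDE Hs HD; split; [|split; [|split; [|split]]].
  - intros x y H; now rewrite <- (sd_lin_inv D E s x), <- (sd_lin_inv D E s y), H.
  - intro y; exists (sd_lin E s y); now apply sd_lin_inv.
  - intros x y z; now apply sd_lin_mul.
  - intros U; apply SDopen_preimage_sd_lin.
  - intros V HV.
    replace (fun y => exists x, V x /\ sd_lin D s x = y) with (fun y => V (sd_lin E s y));
      [now apply SDopen_preimage_sd_lin|].
    apply pred_ext; intro y; split.
    + intro H; exists (sd_lin E s y); split; [assumption|now apply sd_lin_inv].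
    + intros [x [Hx <-]]; now rewrite sd_lin_inv.
Qed.

Lemma SD_isomorphic_conj A Q : inGL2Z A -> inGL2Z Q ->
  topgrp_isomorphic (SDmul A) SDopen (SDmul (Mmul (Minv Q) (Mmul A Q))) SDopen.
Proof.
  intros HA HQ; exists (sd_lin (Minv Q) 1).
  apply (sd_lin_iso _ _ _ Q); [now apply Mmul_Minv_r|now apply Mmul_Minv_l|reflexivity|].
  intro m; rewrite Z.mul_1_l, Mzpow_conj by assumption.
  now rewrite <- Mmul_assoc, <- (Mmul_assoc (Mzpow A m) Q), Mmul_Minv_r, Mmul_1_r.
Qed.

Lemma SD_isomorphic_Minv B : inGL2Z B ->
  topgrp_isomorphic (SDmul (Minv B)) SDopen (SDmul B) SDopen.
Proof.
  intro HB; exists (sd_lin Mid (-1)).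
  apply (sd_lin_iso _ _ _ Mid); [apply Mmul_1_l..|reflexivity|].
  intro m; rewrite Mmul_1_l, Mmul_1_r, <- Mzpow_opp by assumption; f_equal; lia.
Qed.

(** * Continuous characters of the circle *)

Section LocallyAdditive.
Variables (L : R -> R) (d : R).
Hypothesis L_add : forall s t, Rabs s < d -> Rabs t < d -> Rabs (s + t) < d ->
  L (s + t) = L s + L t.
Hypothesis L_cont0 : forall e, 0 < e -> exists r, 0 < r /\ forall t, Rabs t < r -> Rabs (L t) < e.

Lemma locally_additive_0 : 0 < d -> L 0 = 0.
Proof.
  intro Hd; pose proof (L_add 0 0) as H; rewrite Rplus_0_r, Rabs_R0 in H; specialize (H Hd Hd Hd); lra.
Qed.

Lemma locally_additive_opp t : Rabs t < d -> L (- t) = - L t.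
Proof.
  intro Ht; assert (Hd : 0 < d) by (pose proof (Rabs_pos t); lra).
  pose proof (L_add t (- t) Ht) as H; rewrite Rabs_Ropp, Rplus_opp_r, Rabs_R0, locally_additive_0 in H
    by assumption; specialize (H Ht Hd); lra.
Qed.

Lemma locally_additive_nat_mul n t : 0 <= t -> INR n * t < d -> L (INR n * t) = INR n * L t.
Proof.
  intro Ht; induction n as [|n IH]; intro Hn.
  - simpl in *; rewrite !Rmult_0_l in *; apply locally_additive_0; lra.
  - rewrite S_INR in *; pose proof (pos_INR n).
    replace ((INR n + 1) * t) with (INR n * t + t) by ring.
    rewrite L_add, IH by (rewrite ?Rabs_right; nra); ring.
Qed.

(* Vanishing at one point [h] propagates to the multiples [j h/n], which are dense in [[0, h]]. *)
Lemma locally_additive_vanish h : 0 < h < d -> L h = 0 -> forall t, 0 <= t < h -> L t = 0.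
Proof.
  intros Hh HLh t Ht.
  destruct (Req_dec (L t) 0) as [|Hne]; [assumption|exfalso].
  pose proof (Rabs_pos_lt _ Hne) as He; destruct (L_cont0 _ He) as [r [Hr HLr]].
  destruct (archimed_cor1 (r / h)) as [n [Hn Hn0]]; [apply Rdiv_lt_0_compat; lra|].
  assert (HnR : 1 <= INR n) by (apply (le_INR 1); lia).
  set (w := h / INR n).
  assert (Hw : 0 < w) by (apply Rdiv_lt_0_compat; lra).
  assert (Hnw : INR n * w = h) by (unfold w; field; lra).
  assert (Hwr : w < r).
  { unfold w, Rdiv; rewrite Rmult_comm; apply (Rmult_lt_compat_r h) in Hn; [|lra].
    replace (r / h * h) with r in Hn by (field; lra); exact Hn. }
  assert (HLw : L w = 0).
  { pose proof (locally_additive_nat_mul n w) as H; rewrite Hnw, HLh in H; specialize (H ltac:(lra) ltac:(lra)).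
    symmetry in H; apply Rmult_integral in H as [|]; lra. }
  destruct (base_Int_part (t / w)) as [Hj1 Hj2]; set (j := Int_part (t / w)) in *.
  assert (Hj0 : (0 <= j)%Z).
  { assert (IZR (-1) < IZR j) by (apply Rle_lt_trans with (t / w - 1); [|lra];
      enough (0 <= t / w) by (simpl; lra); apply Rle_mult_inv_pos; lra).
    apply lt_IZR in H; lia. }
  set (t0 := IZR j * w).
  assert (Ht0 : t0 <= t < t0 + w).
  { assert (t / w * w = t) by (field; lra); unfold t0; split; nra. }
  assert (Ht00 : 0 <= t0) by (apply Rmult_le_pos; [now apply IZR_le|lra]).
  assert (HLt0 : L t0 = 0).
  { assert (Hjn : INR (Z.to_nat j) = IZR j) by (rewrite INR_IZR_INZ, Z2Nat.id; auto).
    unfold t0; rewrite <- Hjn, locally_additive_nat_mul, HLw; [ring|lra|rewrite Hjn; fold t0; lra]. }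
  assert (HLt : L t = L (t - t0)).
  { replace t with (t0 + (t - t0)) at 1 by ring.
    rewrite L_add, HLt0, Rplus_0_l; [reflexivity|rewrite Rabs_right; lra..]. }
  pose proof (HLr (t - t0) ltac:(rewrite Rabs_right; lra)) as Hsmall; rewrite <- HLt in Hsmall; lra.
Qed.

End LocallyAdditive.

Lemma locally_additive_linear (L : R -> R) d : 0 < d ->
  (forall s t, Rabs s < d -> Rabs t < d -> Rabs (s + t) < d -> L (s + t) = L s + L t) ->
  (forall e, 0 < e -> exists r, 0 < r /\ forall t, Rabs t < r -> Rabs (L t) < e) ->
  exists c, forall t, Rabs t < d / 2 -> L t = c * t.
Proof.
  intros Hd L_add L_cont0.
  set (h := d / 2); set (c := L h / h); set (f t := L t - c * t).
  assert (f_add : forall s t, Rabs s < d -> Rabs t < d -> Rabs (s + t) < d -> f (s + t) = f s + f t)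
    by (intros s t Hs Ht Hst; unfold f; rewrite L_add by assumption; ring).
  assert (f_cont0 : forall e, 0 < e -> exists r, 0 < r /\ forall t, Rabs t < r -> Rabs (f t) < e).
  { intros e He; destruct (L_cont0 (e / 2)) as [r [Hr HLr]]; [lra|].
    pose proof (Rabs_pos c).
    exists (Rmin r (e / (2 * (Rabs c + 1)))); split.
    { unfold Rmin; destruct (Rle_dec _ _); [assumption|apply Rdiv_lt_0_compat; lra]. }
    intros t Ht; pose proof (Rmin_l r (e / (2 * (Rabs c + 1)))); pose proof (Rmin_r r (e / (2 * (Rabs c + 1)))).
    assert (Hct : Rabs c * Rabs t <= e / 2).
    { assert ((Rabs c + 1) * (e / (2 * (Rabs c + 1))) = e / 2) by (field; lra).
      pose proof (Rabs_pos t); nra. }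
    unfold f; eapply Rle_lt_trans; [apply Rabs_triang|].
    rewrite Rabs_Ropp, Rabs_mult; pose proof (HLr t ltac:(lra)); lra. }
  assert (Hfh : f h = 0) by (unfold f, c, h; field; lra).
  assert (Hhd : 2 * h = d) by (unfold h; field).
  exists c; intros t Ht; enough (f t = 0) by (unfold f in *; lra).
  destruct (Rle_lt_dec 0 t).
  - rewrite Rabs_right in Ht by lra.
    apply (locally_additive_vanish f d f_add f_cont0 h); [lra|exact Hfh|lra].
  - rewrite Rabs_left in Ht by lra.
    rewrite <- (Ropp_involutive t), (locally_additive_opp f d f_add) by (rewrite Rabs_Ropp, Rabs_left; lra).
    rewrite (locally_additive_vanish f d f_add f_cont0 h); [lra|lra|exact Hfh|lra].
Qed.

Lemma cong1_additive_0 (g : R -> R) : (forall s t, g (s + t) ≡ g s + g t) -> g 0 ≡ 0.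
Proof.
  intro g_add; apply (cong1_add_cancel_l (g 0)); rewrite Rplus_0_r, <- g_add, Rplus_0_r; reflexivity.
Qed.

Lemma cong1_additive_nat_mul (g : R -> R) :
  (forall s t, g (s + t) ≡ g s + g t) -> forall n t, g (INR n * t) ≡ INR n * g t.
Proof.
  intros g_add n t.
  induction n as [|n IH]; [change (INR 0) with 0; rewrite !Rmult_0_l; now apply cong1_additive_0|].
  rewrite S_INR, Rmult_plus_distr_r, Rmult_plus_distr_r, !Rmult_1_l, g_add, IH; reflexivity.
Qed.

Lemma cong1_additive_extend (g : R -> R) c d : 0 < d ->
  (forall s t, g (s + t) ≡ g s + g t) -> (forall t, Rabs t < d -> g t ≡ c * t) ->
  forall t, g t ≡ c * t.
Proof.
  intros Hd g_add g_loc t; pose proof (Rabs_pos t).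
  destruct (archimed_cor1 (d / (Rabs t + 1))) as [n [Hn Hn0]]; [apply Rdiv_lt_0_compat; lra|].
  assert (HnR : 0 < INR n) by (apply lt_0_INR; assumption).
  set (u := t / INR n).
  assert (Hu : Rabs u < d).
  { unfold u, Rdiv; rewrite Rabs_mult, (Rabs_right (/ INR n)) by (left; apply Rinv_0_lt_compat; lra).
    apply (Rmult_lt_compat_r (Rabs t + 1)) in Hn; [|lra].
    replace (d / (Rabs t + 1) * (Rabs t + 1)) with d in Hn by (field; lra).
    pose proof (Rinv_0_lt_compat _ HnR); nra. }
  replace t with (INR n * u) at 1 by (unfold u; field; lra).
  rewrite cong1_additive_nat_mul, g_loc by assumption.
  unfold u; replace (INR n * (c * (t / INR n))) with (c * t) by (field; lra); reflexivity.
Qed.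

(* The lift [L] of [g] to [[-1/2, 1/2)] is additive near 0, hence linear there. *)
Lemma cong1_character_linear (g : R -> R) :
  (forall s t, g (s + t) ≡ g s + g t) -> g 1 ≡ 0 ->
  (forall e, 0 < e -> e <= 1/2 -> exists r, 0 < r /\ forall t, Rabs t < r -> near e (g t) 0) ->
  exists a : Z, forall t, g t ≡ IZR a * t.
Proof.
  intros g_add g1 g_cont.
  set (L t := frac_part (g t + 1/2) - 1/2).
  assert (L_cong : forall t, L t ≡ g t).
  { intro t; unfold L; rewrite frac_part_cong1; replace (g t + 1/2 - 1/2) with (g t) by ring; reflexivity. }
  assert (L_repr : forall t z, -1/2 <= z < 1/2 -> g t ≡ z -> L t = z).
  { intros t z Hz Hg; unfold L; rewrite (frac_part_of_cong1 _ (z + 1/2)); [ring|lra|now rewrite Hg]. }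
  assert (L_small : forall e, 0 < e <= 1/2 -> exists r, 0 < r /\ forall t, Rabs t < r -> Rabs (L t) < e).
  { intros e He; destruct (g_cont e) as [r [Hr Hgr]]; try lra; exists r; split; [assumption|].
    intros t Ht; destruct (Hgr t Ht) as [z [Hz Hgz]]; rewrite Rplus_0_l in Hgz.
    pose proof (Rabs_def2 _ _ Hz); rewrite (L_repr t z); [assumption|lra|assumption]. }
  destruct (L_small (1/8)) as [d [Hd HLd]]; [lra|].
  assert (L_add : forall s t, Rabs s < d -> Rabs t < d -> Rabs (s + t) < d -> L (s + t) = L s + L t).
  { intros s t Hs Ht _; apply L_repr.
    - pose proof (Rabs_def2 _ _ (HLd s Hs)); pose proof (Rabs_def2 _ _ (HLd t Ht)); lra.
    - now rewrite g_add, !L_cong. }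
  assert (L_cont0 : forall e, 0 < e -> exists r, 0 < r /\ forall t, Rabs t < r -> Rabs (L t) < e).
  { intros e He; destruct (L_small (Rmin e (1/2))) as [r [Hr HLr]].
    { unfold Rmin; destruct (Rle_dec _ _); lra. }
    exists r; split; [assumption|]; intros t Ht; pose proof (Rmin_l e (1/2)); pose proof (HLr t Ht); lra. }
  destruct (locally_additive_linear L d Hd L_add L_cont0) as [c Hc].
  assert (g_lin : forall t, g t ≡ c * t).
  { apply (cong1_additive_extend g c (d / 2)); [lra|assumption|].
    intros t Ht; rewrite <- L_cong, Hc by assumption; reflexivity. }
  assert (Hc0 : c ≡ 0) by (now rewrite <- g1, g_lin, Rmult_1_r).
  destruct Hc0 as [a Ha]; exists a; intro t; rewrite g_lin, Ha, Rplus_0_l; reflexivity.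
Qed.

Lemma cong1_character2_linear (phi : R -> R -> R) :
  (forall s1 s2 t1 t2, phi (s1 + t1) (s2 + t2) ≡ phi s1 s2 + phi t1 t2) ->
  phi 1 0 ≡ 0 -> phi 0 1 ≡ 0 ->
  (forall e, 0 < e -> e <= 1/2 -> exists r, 0 < r /\
     forall t1 t2, Rabs t1 < r -> Rabs t2 < r -> near e (phi t1 t2) 0) ->
  exists a b : Z, forall t1 t2, phi t1 t2 ≡ IZR a * t1 + IZR b * t2.
Proof.
  intros phi_add phi10 phi01 phi_cont.
  assert (Ha : exists a : Z, forall t, phi t 0 ≡ IZR a * t).
  { apply cong1_character_linear; [intros s t; now rewrite <- phi_add, Rplus_0_r|assumption|].
    intros e He He2; destruct (phi_cont e He He2) as [r [Hr Hphi]]; exists r; split; [assumption|].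
    intros t Ht; apply Hphi; [assumption|now rewrite Rabs_R0]. }
  assert (Hb : exists b : Z, forall t, phi 0 t ≡ IZR b * t).
  { apply cong1_character_linear; [intros s t; now rewrite <- phi_add, Rplus_0_r|assumption|].
    intros e He He2; destruct (phi_cont e He He2) as [r [Hr Hphi]]; exists r; split; [assumption|].
    intros t Ht; apply Hphi; [now rewrite Rabs_R0|assumption]. }
  destruct Ha as [a Ha], Hb as [b Hb].
  exists a, b; intros t1 t2.
  rewrite <- Ha, <- Hb, <- phi_add, Rplus_0_r, Rplus_0_l; reflexivity.
Qed.

(** * The torus is characteristic *)

Fixpoint sqrt_chain (A : Mat2) (k : nat) (x : SD) : Prop :=
  match k with
  | O => True
  | S k => exists y, SDmul A y y x /\ sqrt_chain A k y
  end.

Lemma sqrt_chain_of_zpart0 A k x : zpart x = 0%Z -> sqrt_chain A k x.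
Proof.
  revert x; induction k as [|k IH]; intros x Hx; simpl; [trivial|].
  exists (sdpt (tor1 x / 2) (tor2 x / 2) 0); split; [|now apply IH].
  apply SDmul_cong1; rewrite zpart_sdpt, Hx; simpl Mzpow; rewrite lin1_id, lin2_id, tor1_sdpt, tor2_sdpt.
  rewrite !Rplus_half_diag; split; [reflexivity|split; reflexivity].
Qed.

Lemma zpart_sqrt_chain A k x : sqrt_chain A k x -> (2 ^ Z.of_nat k | zpart x)%Z.
Proof.
  revert x; induction k as [|k IH]; intros x Hx; [apply Z.divide_1_l|].
  destruct Hx as [y [Hy Hchain]]; apply SDmul_cong1 in Hy as [Hm _].
  destruct (IH y Hchain) as [q Hq]; exists q.
  rewrite Hm, Hq, Nat2Z.inj_succ, Z.pow_succ_r by lia; ring.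
Qed.

Lemma zpart0_of_sqrt_chain A x : (forall k, sqrt_chain A k x) -> zpart x = 0%Z.
Proof.
  intro H; set (m := zpart x).
  pose proof (zpart_sqrt_chain A _ x (H (Z.to_nat (Z.abs m)))) as Hdiv.
  rewrite Z2Nat.id in Hdiv by lia; apply Z.divide_abs_r in Hdiv.
  pose proof (Z.pow_gt_lin_r 2 (Z.abs m) ltac:(lia) ltac:(lia)).
  destruct (Z.eq_dec m 0) as [|Hm]; [assumption|].
  apply Z.divide_pos_le in Hdiv; lia.
Qed.

Section Isomorphism.
Variables (A B : Mat2) (K : SD -> SD).
Hypothesis HK : is_topgrp_iso (SDmul A) SDopen (SDmul B) SDopen K.

Lemma iso_mul x y z : SDmul A x y z -> SDmul B (K x) (K y) (K z).
Proof. destruct HK as [_ [_ [H _]]]; apply H. Qed.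

Lemma iso_sqrt_chain k x : sqrt_chain A k x -> sqrt_chain B k (K x).
Proof.
  revert x; induction k as [|k IH]; intro x; simpl; [trivial|].
  intros [y [Hy Hchain]]; exists (K y); split; [now apply iso_mul|now apply IH].
Qed.

Lemma iso_zpart0 x : zpart x = 0%Z -> zpart (K x) = 0%Z.
Proof.
  intro Hx; apply (zpart0_of_sqrt_chain B); intro k.
  now apply iso_sqrt_chain, sqrt_chain_of_zpart0.
Qed.

Lemma iso_torus_add s1 s2 t1 t2 :
  tor1 (K (sdpt (s1 + t1) (s2 + t2) 0)) ≡ tor1 (K (sdpt s1 s2 0)) + tor1 (K (sdpt t1 t2 0)) /\
  tor2 (K (sdpt (s1 + t1) (s2 + t2) 0)) ≡ tor2 (K (sdpt s1 s2 0)) + tor2 (K (sdpt t1 t2 0)).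
Proof.
  assert (H : SDmul A (sdpt s1 s2 0) (sdpt t1 t2 0) (sdpt (s1 + t1) (s2 + t2) 0))
    by (apply SDmul_sdpt; simpl Mzpow; now rewrite ?lin1_id, ?lin2_id).
  apply iso_mul, SDmul_cong1 in H as [_ [H1 H2]].
  rewrite iso_zpart0 in H1, H2 by reflexivity; simpl Mzpow in H1, H2.
  now rewrite lin1_id in H1; rewrite lin2_id in H2.
Qed.

Lemma iso_torus_0 : tor1 (K (sdpt 0 0 0)) ≡ 0 /\ tor2 (K (sdpt 0 0 0)) ≡ 0.
Proof.
  split; [apply (cong1_additive_0 (fun t => tor1 (K (sdpt t 0 0))))
         |apply (cong1_additive_0 (fun t => tor2 (K (sdpt t 0 0))))];
    intros s t; pose proof (iso_torus_add s 0 t 0) as [H1 H2]; rewrite Rplus_0_r in H1, H2; assumption.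
Qed.

Lemma iso_torus_continuous e : 0 < e -> e <= 1/2 -> exists r, 0 < r /\ forall t1 t2,
  Rabs t1 < r -> Rabs t2 < r ->
  near e (tor1 (K (sdpt t1 t2 0))) 0 /\ near e (tor2 (K (sdpt t1 t2 0))) 0.
Proof.
  intros He He2.
  set (U y := zpart y = 0%Z /\ near e (tor1 y) 0 /\ near e (tor2 y) 0).
  assert (HU : SDopen U).
  { apply SDopen_intro; intros y [Hy [N1 N2]].
    destruct (near_open _ _ _ N1) as [r1 [Hr1 H1]], (near_open _ _ _ N2) as [r2 [Hr2 H2]].
    exists (Rmin r1 r2); split; [unfold Rmin; destruct (Rle_dec _ _); lra|].
    intros y' Hy' N1' N2'; split; [congruence|split].
    - apply H1; eapply near_mono; [apply Rmin_l|exact N1'].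
    - apply H2; eapply near_mono; [apply Rmin_r|exact N2']. }
  assert (HU0 : U (K (sdpt 0 0 0))).
  { destruct iso_torus_0 as [H1 H2]; split; [now apply iso_zpart0|].
    split; exists 0; (split; [rewrite Rabs_R0; lra|now rewrite Rplus_0_r]). }
  destruct HK as [_ [_ [_ [Hcont _]]]].
  destruct (SDopen_elim _ _ (Hcont U HU) HU0) as [r [Hr HUr]].
  exists r; split; [lra|]; intros t1 t2 Ht1 Ht2.
  enough (U (K (sdpt t1 t2 0))) by (unfold U in *; tauto).
  apply HUr; [reflexivity| |].
  - exists t1; split; [assumption|]; now rewrite tor1_sdpt0, Rplus_0_l, tor1_sdpt.
  - exists t2; split; [assumption|]; now rewrite tor2_sdpt0, Rplus_0_l, tor2_sdpt.
Qed.

Lemma iso_torus_matrix : exists C, forall t1 t2,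
  tor1 (K (sdpt t1 t2 0)) ≡ lin1 C t1 t2 /\ tor2 (K (sdpt t1 t2 0)) ≡ lin2 C t1 t2.
Proof.
  assert (Hper1 : sdpt 1 0 0 = sdpt 0 0 0) by (apply sdpt_cong1; [apply cong1_IZR|reflexivity]).
  assert (Hper2 : sdpt 0 1 0 = sdpt 0 0 0) by (apply sdpt_cong1; [reflexivity|apply cong1_IZR]).
  destruct iso_torus_0 as [K1 K2].
  destruct (cong1_character2_linear (fun t1 t2 => tor1 (K (sdpt t1 t2 0)))) as [a [b Hab]].
  - intros; apply iso_torus_add.
  - now rewrite Hper1.
  - now rewrite Hper2.
  - intros e He He2; destruct (iso_torus_continuous e He He2) as [r [Hr Hnear]].
    exists r; split; [assumption|]; intros t1 t2 Ht1 Ht2; now apply Hnear.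
  - destruct (cong1_character2_linear (fun t1 t2 => tor2 (K (sdpt t1 t2 0)))) as [c [d Hcd]].
    + intros; apply iso_torus_add.
    + now rewrite Hper1.
    + now rewrite Hper2.
    + intros e He He2; destruct (iso_torus_continuous e He He2) as [r [Hr Hnear]].
      exists r; split; [assumption|]; intros t1 t2 Ht1 Ht2; now apply Hnear.
    + exists (mkMat2 a b c d); intros t1 t2; split; [apply Hab|apply Hcd].
Qed.

Lemma iso_zpart_mul x y z : SDmul A x y z -> zpart (K z) = (zpart (K x) + zpart (K y))%Z.
Proof. intro H; now apply iso_mul, SDmul_cong1 in H as [Hm _]. Qed.

Lemma iso_zpart x : zpart (K x) = (zpart x * zpart (K (sdpt 0 0 1)))%Z.
Proof.
  set (s := zpart (K (sdpt 0 0 1))).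
  assert (Hstep : forall m, zpart (K (sdpt 0 0 (1 + m))) = (s + zpart (K (sdpt 0 0 m)))%Z).
  { intro m; apply iso_zpart_mul, SDmul_sdpt;
      [rewrite lin1_0, Rplus_0_r|rewrite lin2_0, Rplus_0_r|]; reflexivity. }
  assert (Hpow : forall m, zpart (K (sdpt 0 0 m)) = (m * s)%Z).
  { intro m; induction m as [|m IH|m IH] using Z.peano_ind.
    - now apply iso_zpart0.
    - rewrite <- Z.add_1_l, Hstep, IH; ring.
    - pose proof (Hstep (Z.pred m)) as H.
      replace (1 + Z.pred m)%Z with m in H by lia; rewrite IH in H; nia. }
  assert (Hx : SDmul A (sdpt (tor1 x) (tor2 x) 0) (sdpt 0 0 (zpart x)) (sdpt (tor1 x) (tor2 x) (zpart x)))
    by (apply SDmul_sdpt; [rewrite lin1_0, Rplus_0_r|rewrite lin2_0, Rplus_0_r|]; reflexivity).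
  rewrite sdpt_eta in Hx.
  rewrite (iso_zpart_mul _ _ _ Hx), iso_zpart0, Hpow by reflexivity; ring.
Qed.

Lemma iso_zpart_unit : zpart (K (sdpt 0 0 1)) = 1%Z \/ zpart (K (sdpt 0 0 1)) = (-1)%Z.
Proof.
  destruct HK as [_ [Ksurj _]]; destruct (Ksurj (sdpt 0 0 1)) as [x Hx].
  pose proof (iso_zpart x) as H; rewrite Hx, zpart_sdpt in H.
  apply (Z.eq_mul_1 _ (zpart x)); now rewrite Z.mul_comm.
Qed.

(* Conjugating [(t, 0)] by the generator [(0, 1)] gives [(A t, 0)]; transport this by [K]. *)
Lemma iso_intertwines C :
  (forall t1 t2, tor1 (K (sdpt t1 t2 0)) ≡ lin1 C t1 t2 /\ tor2 (K (sdpt t1 t2 0)) ≡ lin2 C t1 t2) ->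
  Mmul (Mzpow B (zpart (K (sdpt 0 0 1)))) C = Mmul C A.
Proof.
  intro HC; apply Mat2_eq_of_lin; intros t1 t2 _ _.
  set (g := sdpt 0 0 1); set (z := sdpt (lin1 A t1 t2) (lin2 A t1 t2) 1).
  assert (Hgp : SDmul A g (sdpt t1 t2 0) z)
    by (apply SDmul_sdpt; rewrite ?Mzpow_1, ?Rplus_0_l; reflexivity).
  assert (Hqg : SDmul A (sdpt (lin1 A t1 t2) (lin2 A t1 t2) 0) g z)
    by (apply SDmul_sdpt; rewrite ?lin1_0, ?lin2_0, ?Rplus_0_r; reflexivity).
  apply iso_mul, SDmul_cong1 in Hgp as [_ [E1 E2]]; apply iso_mul, SDmul_cong1 in Hqg as [_ [F1 F2]].
  rewrite iso_zpart0 in F1, F2 by reflexivity; simpl Mzpow in F1, F2; rewrite lin1_id in F1; rewrite lin2_id in F2.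
  destruct (HC t1 t2) as [P1 P2], (HC (lin1 A t1 t2) (lin2 A t1 t2)) as [Q1 Q2].
  rewrite P1, P2 in E1, E2; rewrite Q1 in F1; rewrite Q2 in F2.
  rewrite lin1_mul, lin2_mul, lin1_mul, lin2_mul; split.
  - apply (cong1_add_cancel_l (tor1 (K g))); rewrite <- E1, F1, Rplus_comm; reflexivity.
  - apply (cong1_add_cancel_l (tor2 (K g))); rewrite <- E2, F2, Rplus_comm; reflexivity.
Qed.

End Isomorphism.

Lemma iso_torus_matrix_inverse A B K G C D :
  is_topgrp_iso (SDmul B) SDopen (SDmul A) SDopen G -> (forall y, K (G y) = y) ->
  (forall t1 t2, tor1 (K (sdpt t1 t2 0)) ≡ lin1 C t1 t2 /\ tor2 (K (sdpt t1 t2 0)) ≡ lin2 C t1 t2) ->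
  (forall t1 t2, tor1 (G (sdpt t1 t2 0)) ≡ lin1 D t1 t2 /\ tor2 (G (sdpt t1 t2 0)) ≡ lin2 D t1 t2) ->
  Mmul C D = Mid.
Proof.
  intros HG KG HC HD; apply Mat2_eq_of_lin; intros t1 t2 _ _.
  set (x := G (sdpt t1 t2 0)).
  assert (Hx : sdpt (tor1 x) (tor2 x) 0 = x)
    by (rewrite <- (iso_zpart0 B A G HG (sdpt t1 t2 0)) by reflexivity; apply sdpt_eta).
  destruct (HD t1 t2) as [D1 D2], (HC (tor1 x) (tor2 x)) as [C1 C2]; fold x in D1, D2.
  assert (HKx : K x = sdpt t1 t2 0) by apply KG.
  rewrite Hx, HKx in C1, C2.
  rewrite lin1_mul, lin2_mul, lin1_id, lin2_id, <- D1, <- D2, <- C1, <- C2, tor1_sdpt, tor2_sdpt.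
  split; reflexivity.
Qed.

Lemma SD_isomorphic_conj_inv A B :
  topgrp_isomorphic (SDmul A) SDopen (SDmul B) SDopen ->
  exists Q, inGL2Z Q /\ (B = Mmul (Minv Q) (Mmul A Q) \/ Minv B = Mmul (Minv Q) (Mmul A Q)).
Proof.
  intros [K HK].
  destruct (is_topgrp_iso_inverse _ _ _ _ _ _ (SDmul_total A) (SDmul_functional B) K HK)
    as [G [HG [KG _]]].
  destruct (iso_torus_matrix A B K HK) as [C HC], (iso_torus_matrix B A G HG) as [D HD].
  assert (HCgl : inGL2Z C) by exact (inGL2Z_of_Mmul_eq1 C D (iso_torus_matrix_inverse A B K G C D HG KG HC HD)).
  assert (HBs : Mzpow B (zpart (K (sdpt 0 0 1))) = Mmul (Minv (Minv C)) (Mmul A (Minv C))).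
  { rewrite Minv_involutive, Mmul_assoc, <- (iso_intertwines A B K HK C HC), <- Mmul_assoc, Mmul_Minv_r
      by assumption; symmetry; apply Mmul_1_r. }
  exists (Minv C); split; [now apply inGL2Z_Minv|].
  destruct (iso_zpart_unit A B K HK) as [Hs|Hs]; rewrite Hs in HBs;
    [left; now rewrite Mzpow_1 in HBs|right; now rewrite Mzpow_m1 in HBs].
Qed.

Lemma SD_isomorphic_of_conj A B Q : inGL2Z A -> inGL2Z B -> inGL2Z Q ->
  (B = Mmul (Minv Q) (Mmul A Q) \/ Minv B = Mmul (Minv Q) (Mmul A Q)) ->
  topgrp_isomorphic (SDmul A) SDopen (SDmul B) SDopen.
Proof.
  intros HA HB HQ [-> | HBQ]; [now apply SD_isomorphic_conj|].
  apply (topgrp_isomorphic_trans _ _ _ _ _ (SDmul (Minv B)) SDopen).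
  - rewrite HBQ; now apply SD_isomorphic_conj.
  - now apply SD_isomorphic_Minv.
Qed.

Theorem mainTheorem14 (alpha beta : R) (A B : Mat2) :
  0 < alpha -> quadratic_irrational alpha ->
  0 < beta -> quadratic_irrational beta ->
  inGL2Z A -> inGL2Z B -> A <> Mid -> B <> Mid ->
  topgrp_isomorphic (AutMul alpha) (AutOpen alpha) (SDmul A) SDopen ->
  topgrp_isomorphic (AutMul beta) (AutOpen beta) (SDmul B) SDopen ->
  (topgrp_isomorphic (AutMul alpha) (AutOpen alpha) (AutMul beta) (AutOpen beta) <->
   exists Cm : Mat2, inGL2Z Cm /\
     (B = Mmul (Minv Cm) (Mmul A Cm) \/ Minv B = Mmul (Minv Cm) (Mmul A Cm))).
Proof.
  intros _ _ _ _ HA HB _ _ Halpha Hbeta.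
  assert (Halpha' : topgrp_isomorphic (SDmul A) SDopen (AutMul alpha) (AutOpen alpha))
    by exact (topgrp_isomorphic_sym _ _ _ _ _ _ (AutMul_total alpha) (SDmul_functional A) Halpha).
  assert (Hbeta' : topgrp_isomorphic (SDmul B) SDopen (AutMul beta) (AutOpen beta))
    by exact (topgrp_isomorphic_sym _ _ _ _ _ _ (AutMul_total beta) (SDmul_functional B) Hbeta).
  split.
  - intro Hab; apply SD_isomorphic_conj_inv.
    eapply topgrp_isomorphic_trans; [exact Halpha'|].
    eapply topgrp_isomorphic_trans; [exact Hab|exact Hbeta].
  - intros [Q [HQ HBQ]].
    eapply topgrp_isomorphic_trans; [exact Halpha|].
    eapply topgrp_isomorphic_trans; [exact (SD_isomorphic_of_conj A B Q HA HB HQ HBQ)|exact Hbeta'].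
Qed.
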